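(* Fix $\theta\in\mathcal B_0$ and a moment order $k\in[L]$, and suppose that, on an event of probability at least $1-\zeta$, the inlier stability condition holds for the cloud $\{\check g^{(k)}_n(\theta)\}_{n=1}^N$ with mean $\mu^{(k)}_g(\theta)$, covariance $\Sigma^{(k)}_g(\theta)$ and constants $\delta_{\mu,k}(\zeta),\delta_{\Sigma,k}(\zeta)$. Let $\hat w^{(k)}(\theta)=\bar w^{[s]}\in\Delta_{N,\epsilon}$ be the weight vector output by the outer-loop procedure at a terminating iteration $s$ with center $\hat\mu^{[s]}$. Then, on that event, $$\Big\|\sum_{n=1}^N\hat w^{(k)}_n(\theta)\check g^{(k)}_n(\theta)-\mu^{(k)}_g(\theta)\Big\|_2\le\delta_{\mu,k}(\zeta)+\alpha_\epsilon\sqrt{C_k},\qquad\alpha_\epsilon=\sqrt{\tfrac{\epsilon}{1-2\epsilon}},$$ where either (a) $C_k=C_{stop,k}$ is the stopping threshold that the terminating certificate satisfies, $\gamma(\bar w^{[s]};\hat\mu^{[s]})\le C_{stop,k}$; or (b) the certificate is produced by the MW–MMW rounds, so that $\gamma(\bar w^{[s]};\hat\mu^{[s]})\le\mathrm{OPT}(\hat\mu^{[s]})+\delta_{T,k}$, the error satisfies $\|\hat\mu^{[s]}-\mu^{(k)}_g(\theta)\|_2\le R_k$, and $$C_k=\sup_{\theta'\in\mathcal B_0}\|\Sigma^{(k)}_g(\theta')\|_{op}+\delta_{\Sigma,k}(\zeta)+(\delta_{\mu,k}(\zeta)+R_k)^2+\delta_{T,k},\quad \delta_{T,k}\le4\nu_k\Big(\sqrt{\tfrac{\log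 p}{T}}+\sqrt{\tfrac{\log(1/(1-\epsilon))}{T}}\Big),$$ with $\nu_k=\max_{i,j}\|\check g^{(k)}_i(\theta)-\check g^{(k)}_j(\theta)\|_2^2$.
   Context: Fix $\epsilon\in[0,1/3)$, $\zeta\in(0,1)$, a parameter set $\Theta\subseteq\mathbb R^p$ and a ball $\mathcal B_0\subseteq\Theta$. For each moment order $k\in[L]$ and $\theta$, $\check g^{(k)}_1(\theta),\dots,\check g^{(k)}_N(\theta)\in\mathbb R^p$ are (contaminated) per-observation gradients. For an index set $I$ and $\epsilon'\in[0,1)$, $\Delta_{I,\epsilon'}=\{w\in\mathbb R^I:\sum_{n\in I}w_n=1,0\le w_n\le\frac1{(1-\epsilon')|I|}\}$, $\Delta_{N,\epsilon}=\Delta_{[N],\epsilon}$. For vectors $g_1,\dots,g_N$ and a center $\hat\mu$: $S(w;\hat\mu)=\sum_nw_n(g_n-\hat\mu)(g_n-\hat\mu)^\top$, $\gamma(w;\hat\mu)=\|S(w;\hat\mu)\|_{op}$, $\mathrm{OPT}(\hat\mu)=\min_{w\in\Delta_{N,\epsilon}}\max_{\rho\succeq0,\mathrm{Tr}\rho=1}\mathrm{Tr}(S(w;\hat\mu)\rho)$. Inlier stability condition for a cloud $g_1,\dots,g_N$ with mean $\mu_g$, PSD $\Sigma_g$, constants $\delta_\mu,\delta_\Sigma$: there is a partition $[N]=I_{in}\sqcup I_{out}$ with $|I_{out}|\le\epsilon N$ such that for all $w\in\Delta_{I_{in},\epsilon/(1-\epsilon)}$, $\|\sum_{n\in I_{in}}w_n(g_n-\mu_g)\|_2\le\delta_\mu$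 and $\sum_{n\in I_{in}}w_n(g_n-\mu_g)(g_n-\mu_g)^\top\preceq\Sigma_g+\delta_\Sigma I$. Outer-loop procedure (spectral gradient reweighting): start from a center $\hat\mu^{[1]}$ in the convex hull of the cloud; at iteration $s$ compute weights $\bar w^{[s]}\in\Delta_{N,\epsilon}$ (via multiplicative-weights / matrix-multiplicative-weights rounds with $T$ inner iterations) for the fixed center $\hat\mu^{[s]}$; stop if $\gamma(\bar w^{[s]};\hat\mu^{[s]})\le C_{stop,k}$, otherwise set $\hat\mu^{[s+1]}=\sum_n\bar w^{[s]}_ng_n$. *)

From HB Require Import structures.
From mathcomp Require Import all_boot all_order all_algebra.
From mathcomp Require Import all_classical all_reals all_analysis.
Set Implicit Arguments. Unset Strict Implicit. Unset Printing Implicit Defensive.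
Import Order.TTheory GRing.Theory Num.Theory.
Local Open Scope classical_set_scope.
Local Open Scope ring_scope.

Section Defs.
Variable R : realType.

Definition norm2 (p : nat) (x : 'cV[R]_p) : R :=
  Num.sqrt (\sum_(i < p) x i ord0 ^+ 2).

Definition opnorm (p : nat) (A : 'M[R]_p) : R :=
  sup [set norm2 (A *m x) | x in [set x : 'cV[R]_p | norm2 x <= 1]].

Definition psd (p : nat) (A : 'M[R]_p) : Prop :=
  A^T = A /\ forall x : 'cV[R]_p, 0 <= (x^T *m A *m x) ord0 ord0.

Definition loewner_le (p : nat) (A B : 'M[R]_p) : Prop := psd (B - A).

(* Delta_{I, eps'} : weights indexed by I (values outside I are irrelevant) *)
Definition Delta_I (N : nat) (I : {set 'I_N}) (e' : R) (w : 'I_N -> R) : Prop :=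
  \sum_(n in I) w n = 1 /\
  forall n, n \in I -> 0 <= w n /\ w n <= 1 / ((1 - e') * #|I|%:R).

Definition Delta_N (N : nat) (e : R) (w : 'I_N -> R) : Prop :=
  Delta_I [set: 'I_N] e w.

Definition Smat (N p : nat) (g : 'I_N -> 'cV[R]_p) (w : 'I_N -> R)
    (muhat : 'cV[R]_p) : 'M[R]_p :=
  \sum_(n < N) w n *: ((g n - muhat) *m (g n - muhat)^T).

Definition gamma (N p : nat) (g : 'I_N -> 'cV[R]_p) (w : 'I_N -> R)
    (muhat : 'cV[R]_p) : R := opnorm (Smat g w muhat).

(* OPT(muhat) = min_{w in Delta_{N,eps}} max_{rho psd, Tr rho = 1} Tr(S(w;muhat) rho)
   (written with inf/sup; both extrema are attained) *)
Definition OPT (N p : nat) (e : R) (g : 'I_N -> 'cV[R]_p) (muhat : 'cV[R]_p) : R :=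
  inf [set sup [set \tr (Smat g w muhat *m rho) |
                rho in [set rho : 'M[R]_p | psd rho /\ \tr rho = 1]]
      | w in [set w | Delta_N e w]].

Definition stability (N p : nat) (e : R) (g : 'I_N -> 'cV[R]_p)
    (mu : 'cV[R]_p) (Sigma : 'M[R]_p) (dmu dSig : R) : Prop :=
  exists Iin : {set 'I_N},
    (#|~: Iin|%:R <= e * N%:R) /\
    forall w : 'I_N -> R, Delta_I Iin (e / (1 - e)) w ->
      norm2 (\sum_(n in Iin) w n *: (g n - mu)) <= dmu /\
      loewner_le (\sum_(n in Iin) w n *: ((g n - mu) *m (g n - mu)^T))
                 (Sigma + dSig%:M).

Definition nu (N p : nat) (g : 'I_N -> 'cV[R]_p) : R :=
  \big[Num.max/0]_(i < N) \big[Num.max/0]_(j < N) norm2 (g i - g j) ^+ 2.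

Definition in_hull (N p : nat) (g : 'I_N -> 'cV[R]_p) (x : 'cV[R]_p) : Prop :=
  exists c : 'I_N -> R, (forall n, 0 <= c n) /\ \sum_(n < N) c n = 1 /\
    x = \sum_(n < N) c n *: g n.

End Defs.

From HB Require Import structures.
From mathcomp Require Import all_boot all_order all_algebra.
From mathcomp Require Import all_classical all_reals all_analysis.
From mathcomp Require Import ring lra.
Import Order.TTheory GRing.Theory Num.Theory.
Local Open Scope classical_set_scope.
Local Open Scope ring_scope.
Set Implicit Arguments. Unset Strict Implicit. Unset Printing Implicit Defensive.

(** Let [d] be the error of the weighted mean and project every point on [d]:
    the projections [a_n] of the centred cloud have [w]-mean zero, so their
    inlier part [S] is balanced by their outlier part, and Cauchy-Schwarz on
    both parts gives [S^2 <= W (1 - W) sum_n w_n a_n^2], where [W] is the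
    inlier mass; the certificate bounds the last sum by [gamma |d|^2].
    Stability of the renormalised inlier weights gives
    [S <= - W |d| (|d| - delta_mu)], hence [W (|d| - delta_mu)^2 <= (1 - W) gamma],
    and the outlier budget forces [(1 - W) / W <= eps / (1 - 2 eps)].
    For the MW-MMW certificate it remains to bound [OPT] by its value at the
    uniform weights on the inliers: stability controls their second moment
    about [mu], and moving the centre to [muhat] costs [(delta_mu + R)^2]. *)

Section WeightedSums.
Variables (R : realFieldType) (I : finType).
Implicit Types (P : pred I) (A : {set I}) (w a b F : I -> R).

Lemma discriminant_le (a b c : R) : 0 <= a ->
  (forall t, 0 <= t ^+ 2 * a - 2 * t * c + b) -> c ^+ 2 <= a * b.
Proof.
rewrite le0r => /orP[/eqP-> | a_gt0] nonneg.
  have [-> | c_neq0] := eqVneq c 0; first by have := nonneg 0; lra.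
  have := nonneg ((b + 1) / (2 * c)).
  have -> : ((b + 1) / (2 * c)) ^+ 2 * 0 - 2 * ((b + 1) / (2 * c)) * c + b = -1.
    by field.
  lra.
have := nonneg (c / a).
have -> : (c / a) ^+ 2 * a - 2 * (c / a) * c + b = b - c ^+ 2 / a.
  by field; rewrite gt_eqF.
by rewrite subr_ge0 ler_pdivrMr // mulrC.
Qed.

Lemma sum_wCauchySchwarz P w a b : (forall i, P i -> 0 <= w i) ->
  (\sum_(i | P i) w i * a i * b i) ^+ 2 <=
  (\sum_(i | P i) w i * a i ^+ 2) * (\sum_(i | P i) w i * b i ^+ 2).
Proof.
move=> w_ge0; apply: discriminant_le.
  by apply: sumr_ge0 => i Pi; rewrite mulr_ge0 ?w_ge0 ?sqr_ge0.
move=> t; have -> : t ^+ 2 * (\sum_(i | P i) w i * a i ^+ 2)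
    - 2 * t * (\sum_(i | P i) w i * a i * b i) + \sum_(i | P i) w i * b i ^+ 2
    = \sum_(i | P i) w i * (t * a i - b i) ^+ 2.
  by rewrite !mulr_sumr -sumrB -big_split /=; apply: eq_bigr => i _; ring.
by apply: sumr_ge0 => i Pi; rewrite mulr_ge0 ?w_ge0 ?sqr_ge0.
Qed.

Lemma sum_sqr_shift P w a z :
  \sum_(i | P i) w i * (a i + z) ^+ 2 = \sum_(i | P i) w i * a i ^+ 2
    + 2 * z * \sum_(i | P i) w i * a i + z ^+ 2 * \sum_(i | P i) w i.
Proof. rewrite !mulr_sumr -!big_split; by apply: eq_bigr => i _ /=; ring. Qed.

Lemma sum_setC A F : \sum_i F i = \sum_(i in A) F i + \sum_(i in ~: A) F i.
Proof. by rewrite (bigID (mem A)); congr (_ + _); apply: eq_bigl => i; rewrite !inE. Qed.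

Lemma sum_in_sqr_le A w a : (forall i, 0 <= w i) ->
  \sum_i w i = 1 -> \sum_i w i * a i = 0 ->
  (\sum_(i in A) w i * a i) ^+ 2 <=
  (\sum_(i in A) w i) * (1 - \sum_(i in A) w i) * \sum_i w i * a i ^+ 2.
Proof.
move=> w_ge0 w_sum1 mean0.
have cs (B : {set I}) : (\sum_(i in B) w i * a i) ^+ 2 <=
    (\sum_(i in B) w i) * \sum_(i in B) w i * a i ^+ 2.
  have := @sum_wCauchySchwarz (fun i => i \in B) w (fun=> 1) a (fun i _ => w_ge0 i).
  under eq_bigr do rewrite mulr1.
  by under [\sum_(i in B) w i * 1 ^+ 2]eq_bigr do rewrite expr1n mulr1.
have compl F : \sum_(i in ~: A) F i = \sum_i F i - \sum_(i in A) F i.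
  by rewrite (sum_setC A) addrC addKr.
have := cs A; have := cs (~: A).
rewrite !compl mean0 w_sum1 sub0r sqrrN (sum_setC A (fun i => w i * a i ^+ 2)).
have W_ge0 : 0 <= \sum_(i in A) w i by apply: sumr_ge0.
have W_le1 : 0 <= 1 - \sum_(i in A) w i.
  by rewrite -w_sum1 -compl; apply: sumr_ge0.
rewrite compl; nra.
Qed.
End WeightedSums.

Lemma excess_sqr_le (R : realFieldType) (W D dm S gam : R) :
  0 < W -> W <= 1 -> 0 <= dm -> dm < D ->
  S + W * D ^+ 2 <= W * (D * dm) -> S ^+ 2 <= W * (1 - W) * (gam * D ^+ 2) ->
  W * (D - dm) ^+ 2 <= (1 - W) * gam.
Proof.
move=> W_gt0 W_le1 dm_ge0 dm_lt_D inlier_bnd S_sqr.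
have excess_ge0 : 0 <= W * D * (D - dm).
  by rewrite !mulr_ge0 // ?subr_ge0 ltW // (le_lt_trans dm_ge0).
have excess_sqr : (W * D * (D - dm)) ^+ 2 <= S ^+ 2.
  have excess_le : W * D * (D - dm) <= - S by lra.
  by rewrite -(sqrrN S) !expr2 ler_pM.
have WD_gt0 : 0 < W * D ^+ 2 by rewrite mulr_gt0 // exprn_gt0 // (le_lt_trans dm_ge0).
rewrite -(ler_pM2l WD_gt0).
rewrite [leLHS](_ : _ = (W * D * (D - dm)) ^+ 2); last by ring.
rewrite [leRHS](_ : _ = W * (1 - W) * (gam * D ^+ 2)); last by ring.
exact: le_trans excess_sqr S_sqr.
Qed.

Lemma excess_le (R : rcfType) (W e gam x : R) :
  0 < W -> W <= 1 -> 0 <= e -> 0 < 1 - 2 * e -> (1 - W) * (1 - e) <= e ->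
  W * x ^+ 2 <= (1 - W) * gam -> x <= Num.sqrt (e / (1 - 2 * e)) * Num.sqrt gam.
Proof.
move=> W_gt0 W_le1 e_ge0 e_lt_half outer excess.
have [x_le0 | x_gt0] := lerP x 0.
  by apply: le_trans x_le0 _; rewrite mulr_ge0 ?sqrtr_ge0.
have gam_gt0 : 0 < gam.
  rewrite ltNge; apply/negP => gam_le0.
  have : (1 - W) * gam <= 0 by rewrite mulr_ge0_le0 // subr_ge0.
  have : 0 < W * x ^+ 2 by rewrite mulr_gt0 // exprn_gt0.
  lra.
have x2_le : x ^+ 2 <= e / (1 - 2 * e) * gam.
  rewrite mulrAC ler_pdivlMr //.
  have h1 : (1 - 2 * e) * x ^+ 2 <= (1 - e) * (W * x ^+ 2).
    rewrite [in X in _ <= X]mulrA; apply: ler_wpM2r; first exact: sqr_ge0.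
    lra.
  have h2 : (1 - e) * (W * x ^+ 2) <= (1 - e) * ((1 - W) * gam).
    by apply: ler_wpM2l; lra.
  have h3 : (1 - e) * ((1 - W) * gam) <= e * gam.
    rewrite [in X in X <= _]mulrA; apply: ler_wpM2r; first exact: ltW.
    lra.
  lra.
rewrite -sqrtrM; last by rewrite divr_ge0 // ltW.
by apply: le_trans _ (ler_wsqrtr x2_le); rewrite sqrtr_sqr ler_norm.
Qed.

Section DotProduct.
Variables (R : realType) (p : nat).
Implicit Types (u x y : 'cV[R]_p).

Definition dot u x : R := \sum_i u i ord0 * x i ord0.

Lemma dotE u x : (u^T *m x) ord0 ord0 = dot u x.
Proof. by rewrite mxE; apply: eq_bigr => i _; rewrite mxE. Qed.

Lemma dotC u x : dot u x = dot x u.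
Proof. by apply: eq_bigr => i _; rewrite mulrC. Qed.

Lemma dotDr u x y : dot u (x + y) = dot u x + dot u y.
Proof. by rewrite -big_split; apply: eq_bigr => i _; rewrite mxE mulrDr. Qed.

Lemma dotZr u x a : dot u (a *: x) = a * dot u x.
Proof. by rewrite mulr_sumr; apply: eq_bigr => i _; rewrite mxE mulrCA. Qed.

Lemma dotNr u x : dot u (- x) = - dot u x.
Proof. by rewrite -scaleN1r dotZr mulN1r. Qed.

Lemma dotBr u x y : dot u (x - y) = dot u x - dot u y.
Proof. by rewrite dotDr dotNr. Qed.

Lemma dot0r u : dot u 0 = 0.
Proof. by rewrite -(scale0r 0) dotZr mul0r. Qed.

Lemma dot_sumr u (I : Type) (r : seq I) (P : pred I) (F : I -> 'cV[R]_p) :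
  dot u (\sum_(i <- r | P i) F i) = \sum_(i <- r | P i) dot u (F i).
Proof. exact: (big_morph (dot u) (dotDr u) (dot0r u)). Qed.

Lemma dotDl u x y : dot (x + y) u = dot x u + dot y u.
Proof. by rewrite !(dotC _ u) dotDr. Qed.

Lemma dotZl u x a : dot (a *: x) u = a * dot x u.
Proof. by rewrite !(dotC _ u) dotZr. Qed.

Lemma dotBl u x y : dot (x - y) u = dot x u - dot y u.
Proof. by rewrite !(dotC _ u) dotBr. Qed.

Lemma dot_ge0 x : 0 <= dot x x.
Proof. by apply: sumr_ge0 => i _; rewrite -expr2 sqr_ge0. Qed.

Lemma norm2E x : norm2 x = Num.sqrt (dot x x).
Proof. by congr Num.sqrt; apply: eq_bigr => i _; rewrite expr2. Qed.

Lemma norm2_ge0 x : 0 <= norm2 x.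
Proof. by rewrite norm2E sqrtr_ge0. Qed.

Lemma norm2_dim0 x : p = 0%N -> norm2 x = 0.
Proof.
move=> p0; rewrite /norm2 big1 ?sqrtr0 // => i _; exfalso.
by have := ltn_ord i; move: (nat_of_ord i) => k; rewrite p0.
Qed.

Lemma norm2_sqr x : norm2 x ^+ 2 = dot x x.
Proof. by rewrite norm2E sqr_sqrtr ?dot_ge0. Qed.

Lemma norm2Z x a : norm2 (a *: x) = `|a| * norm2 x.
Proof.
by rewrite !norm2E dotZl dotZr mulrA -expr2 sqrtrM ?sqr_ge0 // sqrtr_sqr.
Qed.

Lemma norm2N x : norm2 (- x) = norm2 x.
Proof. by rewrite -scaleN1r norm2Z normrN normr1 mul1r. Qed.

Lemma dot_CauchySchwarz u x : dot u x ^+ 2 <= dot u u * dot x x.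
Proof.
apply: discriminant_le; first exact: dot_ge0.
move=> t; have := dot_ge0 (t *: u - x).
by rewrite dotBl !dotBr !dotZl !dotZr (dotC x u); lra.
Qed.

Lemma ler_norm_dot u x : `|dot u x| <= norm2 u * norm2 x.
Proof.
rewrite -[`|_|]sqrtr_sqr norm2E norm2E -sqrtrM ?dot_ge0 //.
by rewrite ler_sqrt ?mulr_ge0 ?dot_ge0 // dot_CauchySchwarz.
Qed.

Lemma dot_le_norm2 u x : dot u x <= norm2 u * norm2 x.
Proof. exact: le_trans (ler_norm _) (ler_norm_dot u x). Qed.

End DotProduct.

Section OperatorNorm.
Variables (R : realType) (p : nat).
Implicit Types (A : 'M[R]_p) (u x : 'cV[R]_p).

Lemma mulmx_dot_row A x i : (A *m x) i ord0 = dot (row i A)^T x.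
Proof. by rewrite mxE; apply: eq_bigr => j _; rewrite !mxE. Qed.

Lemma norm2_mulmx_rows A x :
  norm2 (A *m x) <= Num.sqrt (\sum_i dot (row i A)^T (row i A)^T) * norm2 x.
Proof.
rewrite !norm2E -sqrtrM ?sumr_ge0 // => [|i _]; last exact: dot_ge0.
apply: ler_wsqrtr; rewrite mulr_suml; apply: ler_sum => i _.
by rewrite -expr2 mulmx_dot_row dot_CauchySchwarz.
Qed.

Lemma opnorm_has_ubound A :
  has_ubound [set norm2 (A *m x) | x in [set x | norm2 x <= 1]].
Proof.
exists (Num.sqrt (\sum_i dot (row i A)^T (row i A)^T)) => _ [x /= x_le1 <-].
apply: le_trans (norm2_mulmx_rows A x) _.
by rewrite ler_piMr ?sqrtr_ge0.
Qed.

Lemma norm2_mulmx_le A x : norm2 (A *m x) <= opnorm A * norm2 x.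
Proof.
have [x0 | x_neq0] := eqVneq (norm2 x) 0.
  by have := norm2_mulmx_rows A x; rewrite x0 !mulr0.
have x_gt0 : 0 < norm2 x by rewrite lt_def x_neq0 norm2_ge0.
have : norm2 (A *m ((norm2 x)^-1 *: x)) <= opnorm A.
  apply: (ub_le_sup (opnorm_has_ubound A)); exists ((norm2 x)^-1 *: x) => //=.
  by rewrite norm2Z ger0_norm ?invr_ge0 ?norm2_ge0 // mulVf.
rewrite -scalemxAr norm2Z ger0_norm ?invr_ge0 ?norm2_ge0 // mulrC.
by rewrite ler_pdivrMr.
Qed.

Lemma dot_mulmx_le_opnorm A u : dot u (A *m u) <= opnorm A * dot u u.
Proof.
apply: le_trans (dot_le_norm2 _ _) _.
rewrite -norm2_sqr expr2 mulrA [opnorm A * _]mulrC -mulrA.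
by rewrite ler_wpM2l ?norm2_ge0 ?norm2_mulmx_le.
Qed.

End OperatorNorm.

Section PositiveSemidefinite.
Variables (R : realType) (p : nat).
Implicit Types (B : 'M[R]_p) (u x y : 'cV[R]_p).

Lemma psd_dot B : psd B -> forall x, 0 <= dot x (B *m x).
Proof. by move=> [_ B_ge0] x; rewrite -dotE mulmxA. Qed.

Lemma psd_sym B : psd B -> forall i j, B i j = B j i.
Proof. by move=> [B_sym _] i j; rewrite -[in LHS]B_sym mxE. Qed.

Lemma mulmx_rank1 x u : x *m x^T *m u = dot x u *: x.
Proof. by rewrite -mulmxA (mx11_scalar (x^T *m u)) dotE mul_mx_scalar. Qed.

Lemma dot_sum_rank1 (I : Type) (r : seq I) (P : pred I) (w : I -> R)
    (x : I -> 'cV[R]_p) u :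
  dot u ((\sum_(i <- r | P i) w i *: (x i *m (x i)^T)) *m u) =
  \sum_(i <- r | P i) w i * dot u (x i) ^+ 2.
Proof.
rewrite mulmx_suml dot_sumr; apply: eq_bigr => i _.
by rewrite -scalemxAl mulmx_rank1 !dotZr dotC mulrA.
Qed.

Lemma dot_mulmx_delta B i j :
  dot (delta_mx i ord0) (B *m delta_mx j ord0) = B i j.
Proof.
rewrite -colE /dot (bigD1 i) //= big1 => [|k /negbTE k_neq_i]; rewrite !mxE.
  by rewrite !eqxx mul1r addr0.
by rewrite k_neq_i mul0r.
Qed.

Lemma psd_diag_ge0 B : psd B -> forall k, 0 <= B k k.
Proof. by move=> psdB k; rewrite -dot_mulmx_delta psd_dot. Qed.

Lemma dot_mulmx_expand B x y a : B^T = B ->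
  dot (x + a *: y) (B *m (x + a *: y)) =
  dot x (B *m x) + 2 * a * dot x (B *m y) + a ^+ 2 * dot y (B *m y).
Proof.
move=> B_sym; have sym_xy : dot y (B *m x) = dot x (B *m y).
  rewrite -!dotE; have -> : y^T *m (B *m x) = (x^T *m (B *m y))^T.
    by rewrite !trmx_mul trmxK B_sym mulmxA.
  by rewrite mxE.
by rewrite mulmxDr -scalemxAr !dotDl !dotDr !dotZl !dotZr sym_xy; ring.
Qed.

Lemma psd_row0 B k j : psd B -> B k k = 0 -> B k j = 0.
Proof.
move=> psdB Bkk0; have [B_sym _] := psdB.
suff sq_le0 : B k j ^+ 2 <= 0 by apply/eqP; rewrite -sqrf_eq0 eq_le sq_le0 sqr_ge0.
rewrite -sqrrN -(mul0r (B j j)); apply: discriminant_le => // t.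
have := psd_dot psdB (delta_mx j ord0 + t *: delta_mx k ord0).
by rewrite dot_mulmx_expand // !dot_mulmx_delta Bkk0 (psd_sym psdB j k); lra.
Qed.

Definition schur B k : 'M[R]_p := B - (B k k)^-1 *: (col k B *m (col k B)^T).

Definition nzrows B : {set 'I_p} := [set i | [exists j, B i j != 0]].

Lemma schurE B k i j : schur B k i j = B i j - B i k * B j k / B k k.
Proof. by rewrite !mxE big_ord1 !mxE mulrC. Qed.

Lemma psd_schur B k : psd B -> 0 < B k k -> psd (schur B k).
Proof.
move=> psdB Bkk_gt0; have [B_sym _] := psdB.
split; first by rewrite linearB /= linearZ /= trmx_mul trmxK B_sym.
move=> x; rewrite -mulmxA dotE mulmxBl -scalemxAl mulmx_rank1 dotBr !dotZr.
pose t := - (dot x (col k B) / B k k).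
have := psd_dot psdB (x + t *: delta_mx k ord0).
rewrite dot_mulmx_expand // dot_mulmx_delta -colE (dotC (col k B)).
suff -> : dot x (B *m x) + 2 * t * dot x (col k B) + t ^+ 2 * B k k =
  dot x (B *m x) - (B k k)^-1 * (dot x (col k B) * dot x (col k B)) by [].
by rewrite /t; field; rewrite gt_eqF.
Qed.

Lemma nzrows_schur B k : psd B -> 0 < B k k ->
  nzrows (schur B k) \subset nzrows B :\ k.
Proof.
move=> psdB Bkk_gt0; apply/fintype.subsetP => i; rewrite !inE => /existsP[j].
rewrite schurE; apply: contraR; rewrite negb_and negbK negb_exists.
case/orP => [/eqP-> | /forallP Bi0].
  by rewrite (psd_sym psdB j k) -mulrA mulrCA (divff (lt0r_neq0 Bkk_gt0)) mulr1 subrr.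
by rewrite !(eqP (negbNE (Bi0 _))) !mul0r subrr.
Qed.

Lemma psd_sum_rank1 B : psd B -> exists s : seq 'cV[R]_p, B = \sum_(u <- s) u *m u^T.
Proof.
(* Cholesky elimination, by induction on the number of nonzero rows: a nonzero
   row has a positive pivot, and the Schur step clears it. *)
move=> psdB; have [n] := ubnP #|nzrows B|.
elim: n B psdB => // n IH B psdB; rewrite ltnS => card_le.
have [nz0 | [k k_nz]] := set_0Vmem (nzrows B).
  exists [::]; rewrite big_nil; apply/matrixP => i j; rewrite mxE.
  have : i \notin nzrows B by rewrite nz0 inE.
  by rewrite inE negb_exists => /forallP/(_ j)/negbNE/eqP.
have /existsP[j Bkj] : [exists j, B k j != 0] by rewrite inE in k_nz.
have Bkk_gt0 : 0 < B k k.
  rewrite lt_def psd_diag_ge0 // andbT; apply: contra Bkj => /eqP Bkk0.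
  by rewrite (psd_row0 j psdB Bkk0).
have [s sE] : exists s : seq 'cV[R]_p, schur B k = \sum_(u <- s) u *m u^T.
  apply: IH (psd_schur psdB Bkk_gt0) _; apply: leq_trans card_le.
  apply: leq_ltn_trans (subset_leq_card (nzrows_schur psdB Bkk_gt0)) _.
  by rewrite [ltnRHS](cardsD1 k) k_nz.
exists ((Num.sqrt (B k k))^-1 *: col k B :: s); rewrite big_cons -sE.
rewrite linearZ /= -scalemxAl -scalemxAr scalerA -invrM ?unitfE ?gt_eqF ?sqrtr_gt0 //.
by rewrite -expr2 sqr_sqrtr ?ltW // /schur addrC subrK.
Qed.

End PositiveSemidefinite.

Section DensityMatrices.
Variables (R : realType) (p : nat).
Implicit Types (S rho : 'M[R]_p) (u : 'cV[R]_p).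

Definition density : set 'M[R]_p := [set rho | psd rho /\ \tr rho = 1].

Lemma mxtrace_mulmx_rank1_sum S (s : seq 'cV[R]_p) :
  \tr (S *m \sum_(u <- s) u *m u^T) = \sum_(u <- s) dot u (S *m u).
Proof.
rewrite mulmx_sumr (big_morph _ (@mxtraceD R p) (mxtrace0 R p)); apply: eq_bigr => u _.
by rewrite mulmxA mxtrace_mulC trace_mx11 dotE.
Qed.

Lemma density_trace_le S rho lam : density rho ->
  (forall u, dot u (S *m u) <= lam * dot u u) -> \tr (S *m rho) <= lam.
Proof.
move=> [/psd_sum_rank1[s ->] tr1] S_le.
have dot_sum1 : \sum_(u <- s) dot u u = 1.
  rewrite -tr1 -[X in \tr X]mul1mx mxtrace_mulmx_rank1_sum.
  by apply: eq_bigr => u _; rewrite mul1mx.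
rewrite mxtrace_mulmx_rank1_sum -[lam]mulr1 -dot_sum1 mulr_sumr.
exact: ler_sum.
Qed.

Lemma density_trace_ge0 S rho : density rho ->
  (forall u, 0 <= dot u (S *m u)) -> 0 <= \tr (S *m rho).
Proof.
move=> [/psd_sum_rank1[s ->] _] S_ge0.
by rewrite mxtrace_mulmx_rank1_sum sumr_ge0.
Qed.

Lemma density_neq0 : (0 < p)%N -> density !=set0.
Proof.
move=> p_gt0; pose e : 'cV[R]_p := delta_mx (Ordinal p_gt0) ord0.
exists (e *m e^T); split; last first.
  by rewrite -[_ *m _]mul1mx mulmxA mxtrace_mulC trace_mx11 dotE
    dot_mulmx_delta mxE !eqxx.
split=> [|x]; first by rewrite trmx_mul trmxK.
by rewrite -mulmxA dotE mulmx_rank1 dotZr (dotC e) -expr2 sqr_ge0.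
Qed.

Lemma sup_density_trace_le S lam : (0 < p)%N ->
  (forall u, dot u (S *m u) <= lam * dot u u) ->
  sup [set \tr (S *m rho) | rho in density] <= lam.
Proof.
move=> p_gt0 S_le; have [rho rho_dens] := density_neq0 p_gt0.
apply: ge_sup; first by exists (\tr (S *m rho)), rho.
by move=> _ [r r_dens <-]; exact: density_trace_le.
Qed.

Lemma sup_density_trace_ge0 S : (0 < p)%N ->
  (forall u, 0 <= dot u (S *m u)) ->
  0 <= sup [set \tr (S *m rho) | rho in density].
Proof.
move=> p_gt0 S_ge0; have [rho rho_dens] := density_neq0 p_gt0.
apply: le_trans (density_trace_ge0 rho_dens S_ge0) _.
apply: ub_le_sup; last by exists rho.
exists (opnorm S) => _ [r r_dens <-].
exact/(density_trace_le r_dens)/dot_mulmx_le_opnorm.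
Qed.

End DensityMatrices.

Section Weights.
Variables (R : realType) (N : nat).
Implicit Types (e : R) (I : {set 'I_N}) (w : 'I_N -> R).

Lemma Delta_NP e w : Delta_N e w <->
  \sum_n w n = 1 /\ forall n, 0 <= w n /\ w n <= 1 / ((1 - e) * N%:R).
Proof.
rewrite /Delta_N /Delta_I cardsT card_ord.
have -> : \sum_(n in [set: 'I_N]%SET) w n = \sum_n w n by apply: eq_bigl => n; rewrite inE.
by split=> [] [w_sum1 w_bnd]; split=> // n *; apply: w_bnd; rewrite ?inE.
Qed.

Lemma Delta_N_gt0 e w : Delta_N e w -> (0 < N)%N.
Proof.
case/Delta_NP=> w_sum1 _; have : \sum_n w n != 0 by rewrite w_sum1 oner_neq0.
by case: N w {w_sum1} => // w; rewrite big_ord0 eqxx.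
Qed.

Lemma Delta_N_outer_le e w I : Delta_N e w ->
  1 - \sum_(n in I) w n <= #|~: I|%:R / ((1 - e) * N%:R).
Proof.
case/Delta_NP=> w_sum1 w_bnd.
rewrite -{1}w_sum1 (sum_setC I) addrAC subrr add0r.
apply: le_trans (ler_sum _ (fun n _ => (w_bnd n).2)) _.
by rewrite sumr_const -(mulr_natl (1 / _)) mul1r.
Qed.

Lemma Delta_N_outer_mass e w I : 0 <= e < 1 -> #|~: I|%:R <= e * N%:R ->
  Delta_N e w -> (1 - \sum_(n in I) w n) * (1 - e) <= e.
Proof.
case/andP=> e_ge0 e_lt1 outer_card wD.
have N_gt0 : 0 < N%:R :> R by rewrite ltr0n (Delta_N_gt0 wD).
apply: le_trans (ler_wpM2r _ (Delta_N_outer_le I wD)) _; first by rewrite subr_ge0 ltW.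
have -> : #|~: I|%:R / ((1 - e) * N%:R) * (1 - e) = #|~: I|%:R / N%:R.
  by field; rewrite !gt_eqF // subr_gt0.
by rewrite ler_pdivrMr.
Qed.

Lemma Delta_N_inner_gt0 e w I : 0 <= e -> 0 < 1 - 2 * e ->
  #|~: I|%:R <= e * N%:R -> Delta_N e w -> 0 < \sum_(n in I) w n.
Proof.
move=> e_ge0 e_lt_half outer_card wD.
have e_lt1 : 0 <= e < 1 by rewrite e_ge0 /=; lra.
by have := Delta_N_outer_mass e_lt1 outer_card wD; nra.
Qed.

Lemma Delta_N_restrict e w I : 0 <= e -> 0 < 1 - 2 * e ->
  #|~: I|%:R <= e * N%:R -> Delta_N e w ->
  Delta_I I (e / (1 - e)) (fun n => w n / \sum_(m in I) w m).
Proof.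
move=> e_ge0 e_lt_half outer_card wD.
have N_gt0 : 0 < N%:R :> R by rewrite ltr0n (Delta_N_gt0 wD).
have /Delta_NP[_ w_bnd] := wD.
have cardI : #|I|%:R + #|~: I|%:R = N%:R :> R by rewrite -natrD cardsC card_ord.
have I_gt0 : 0 < #|I|%:R :> R by nra.
set W := \sum_(m in I) w m; set c := 1 / ((1 - e) * N%:R).
have W_gt0 : 0 < W := Delta_N_inner_gt0 e_ge0 e_lt_half outer_card wD.
have cN : c * ((1 - e) * N%:R) = 1 by rewrite /c mul1r mulVf // gt_eqF // mulr_gt0 //; lra.
have c_gt0 : 0 < c by rewrite divr_gt0 // mulr_gt0 //; lra.
have W_ge : 1 - c * #|~: I|%:R <= W.
  by have := Delta_N_outer_le I wD; rewrite -/W mulrC /c mul1r; lra.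
have card_bnd : (1 - 2 * e) * #|I|%:R + (1 - e) * #|~: I|%:R <= (1 - e) ^+ 2 * N%:R.
  nra.
split=> [|n _]; first by rewrite -mulr_suml mulfV // lt0r_neq0.
have [wn_ge0 wn_le] := w_bnd n; split; first by rewrite divr_ge0 // ltW.
have -> : 1 / ((1 - e / (1 - e)) * #|I|%:R) = (1 - e) / ((1 - 2 * e) * #|I|%:R).
  by field; rewrite !gt_eqF //; lra.
rewrite ler_pdivrMr // mulrAC ler_pdivlMr ?mulr_gt0 //.
have wn_scaled : w n * ((1 - 2 * e) * #|I|%:R) <= c * ((1 - 2 * e) * #|I|%:R).
  by rewrite ler_wpM2r // mulr_ge0 // ltW.
have budget : c * ((1 - 2 * e) * #|I|%:R) <= (1 - e) * (1 - c * #|~: I|%:R).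
  have := ler_wpM2l (ltW c_gt0) card_bnd.
  have -> : c * ((1 - e) ^+ 2 * N%:R) = (1 - e) * (c * ((1 - e) * N%:R)) by ring.
  rewrite cN mulr1; lra.
have inner_mass : (1 - e) * (1 - c * #|~: I|%:R) <= (1 - e) * W.
  by rewrite ler_wpM2l //; lra.
lra.
Qed.

Definition unif_on I : 'I_N -> R := fun n => if n \in I then #|I|%:R^-1 else 0.

Lemma unif_on_ge0 I n : 0 <= unif_on I n.
Proof. by rewrite /unif_on; case: ifP; rewrite ?invr_ge0. Qed.

Lemma sum_unif_on I : (0 < #|I|)%N -> \sum_(n in I) unif_on I n = 1.
Proof.
move=> I_gt0; rewrite (eq_bigr (fun=> #|I|%:R^-1)) => [|n nI]; last by rewrite /unif_on nI.
by rewrite sumr_const -[_ *+ _]mulr_natr mulVf // pnatr_eq0 -lt0n.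
Qed.

Lemma sum_unif_on_supp I (F : 'I_N -> R) :
  \sum_n unif_on I n * F n = \sum_(n in I) unif_on I n * F n.
Proof.
by rewrite [RHS]big_rmcond // => n /negbTE nI; rewrite /unif_on nI mul0r.
Qed.

Lemma unif_on_Delta_I I e' : 0 <= e' < 1 -> (0 < #|I|)%N -> Delta_I I e' (unif_on I).
Proof.
case/andP=> e'_ge0 e'_lt1 I_gt0; split=> [|n nI]; first exact: sum_unif_on.
split; first exact: unif_on_ge0.
rewrite /unif_on nI div1r lef_pV2 ?posrE ?mulr_gt0 ?ltr0n ?subr_gt0 //.
by rewrite ler_piMl ?ler0n // lerBlDr lerDl.
Qed.

Lemma unif_on_Delta_N I e : e < 1 -> (1 - e) * N%:R <= #|I|%:R -> (0 < #|I|)%N ->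
  Delta_N e (unif_on I).
Proof.
move=> e_lt1 card_ge I_gt0; apply/Delta_NP; split.
  by rewrite -(sum_unif_on I_gt0) [RHS]big_rmcond // => n /negbTE nI; rewrite /unif_on nI.
have N_gt0 : 0 < (1 - e) * N%:R.
  rewrite mulr_gt0 ?subr_gt0 // ltr0n (leq_trans I_gt0) //.
  by rewrite -[X in (_ <= X)%N]card_ord max_card.
move=> n; split; first exact: unif_on_ge0.
rewrite /unif_on; case: ifP => _; last by rewrite divr_ge0 ?ltW.
by rewrite div1r lef_pV2 ?posrE ?ltr0n.
Qed.
End Weights.

Arguments unif_on {R N} I n.

Section RobustMean.
Variables (R : realType) (p : nat) (I : finType).
Implicit Types (g : I -> 'cV[R]_p) (w : I -> R) (A : {set I}).

Lemma robust_mean_err g (m c : 'cV[R]_p) w A (dm gam e : R) :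
  (forall i, 0 <= w i) -> \sum_i w i = 1 -> 0 <= e -> 0 < 1 - 2 * e ->
  0 < \sum_(i in A) w i -> (1 - \sum_(i in A) w i) * (1 - e) <= e ->
  norm2 (\sum_(i in A) (w i / \sum_(j in A) w j) *: (g i - m)) <= dm ->
  (forall v, \sum_i w i * dot v (g i - c) ^+ 2 <= gam * dot v v) ->
  norm2 (\sum_i w i *: g i - m) <= dm + Num.sqrt (e / (1 - 2 * e)) * Num.sqrt gam.
Proof.
move=> w_ge0 w_sum1 e_ge0 e_lt_half W_gt0 outer inlier_mean var_bnd.
set W := \sum_(i in A) w i in W_gt0 outer inlier_mean *.
set mw := \sum_i w i *: g i; set d := mw - m.
have dm_ge0 : 0 <= dm := le_trans (norm2_ge0 _) inlier_mean.
have [d_le | d_gt] := lerP (norm2 d) dm.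
  by apply: le_trans d_le _; rewrite lerDl mulr_ge0 ?sqrtr_ge0.
have W_le1 : W <= 1 by rewrite -w_sum1 (sum_setC A) lerDl sumr_ge0.
rewrite addrC -lerBlDr; apply: (excess_le W_gt0 W_le1 e_ge0 e_lt_half outer).
pose a i := dot d (g i - mw).
have shift x i : dot d (g i - x) = a i + dot d (mw - x).
  by rewrite /a -dotDr addrA subrK.
have mean0 : \sum_i w i * a i = 0.
  under eq_bigr do rewrite /a dotBr mulrBr.
  rewrite sumrB -mulr_suml w_sum1 mul1r dot_sumr.
  by under [X in _ - X]eq_bigr do rewrite dotZr; rewrite subrr.
have inlier_bnd : \sum_(i in A) w i * a i + W * norm2 d ^+ 2 <= W * (norm2 d * dm).
  have := le_trans (dot_le_norm2 d _) (ler_wpM2l (norm2_ge0 d) inlier_mean).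
  rewrite dot_sumr (eq_bigr (fun i => W^-1 * (w i * a i + w i * dot d d))); last first.
    by move=> i _; rewrite dotZr shift; ring.
  by rewrite -mulr_sumr big_split /= -mulr_suml ler_pdivrMl // norm2_sqr.
have var_a : \sum_i w i * a i ^+ 2 <= gam * norm2 d ^+ 2.
  have := var_bnd d; under eq_bigr do rewrite shift.
  rewrite sum_sqr_shift mean0 w_sum1 mulr0 addr0 mulr1 norm2_sqr.
  by have := sqr_ge0 (dot d (mw - c)); lra.
have split_bnd := sum_in_sqr_le A w_ge0 w_sum1 mean0; rewrite -/W in split_bnd.
apply: (excess_sqr_le W_gt0 W_le1 dm_ge0 d_gt inlier_bnd (le_trans split_bnd _)).
by apply: ler_wpM2l var_a; apply: mulr_ge0; [exact: ltW | rewrite subr_ge0].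
Qed.

End RobustMean.

Section Stability.
Variables (R : realType) (N p : nat).
Implicit Types (e : R) (g : 'I_N -> 'cV[R]_p) (w : 'I_N -> R) (A B S : 'M[R]_p).

Lemma loewner_le_dot A B u : loewner_le A B -> dot u (A *m u) <= dot u (B *m u).
Proof. by move/psd_dot/(_ u); rewrite mulmxBl dotBr subr_ge0. Qed.

Lemma Smat_dot g w c u :
  dot u (Smat g w c *m u) = \sum_n w n * dot u (g n - c) ^+ 2.
Proof. exact: dot_sum_rank1. Qed.

Lemma OPT_le e g c w lam : (0 < p)%N -> Delta_N e w ->
  (forall u, dot u (Smat g w c *m u) <= lam * dot u u) -> OPT e g c <= lam.
Proof.
move=> p_gt0 wD S_le; apply: le_trans (sup_density_trace_le p_gt0 S_le).
apply: ge_inf; last by exists w.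
exists 0 => _ [w' /Delta_NP[_ w'_bnd] <-]; apply: sup_density_trace_ge0 => // u.
by rewrite Smat_dot sumr_ge0 // => n _; rewrite mulr_ge0 ?sqr_ge0 ?(w'_bnd n).1.
Qed.

Lemma stable_mean_err e g m S dm dS w c C : 0 <= e -> 0 < 1 - 2 * e ->
  stability e g m S dm dS -> Delta_N e w -> gamma g w c <= C ->
  norm2 (\sum_n w n *: g n - m) <= dm + Num.sqrt (e / (1 - 2 * e)) * Num.sqrt C.
Proof.
move=> e_ge0 e_lt_half [Iin [outer_card stable]] wD gamma_le.
have /Delta_NP[w_sum1 w_bnd] := wD.
have e_lt1 : 0 <= e < 1 by rewrite e_ge0 /=; lra.
apply: (robust_mean_err (c := c)) (fun n => (w_bnd n).1) w_sum1 e_ge0 e_lt_half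
  (Delta_N_inner_gt0 e_ge0 e_lt_half outer_card wD)
  (Delta_N_outer_mass e_lt1 outer_card wD)
  (stable _ (Delta_N_restrict e_ge0 e_lt_half outer_card wD)).1 _ => v.
rewrite -Smat_dot; apply: le_trans (dot_mulmx_le_opnorm _ _) _.
by apply: ler_wpM2r; [exact: dot_ge0 | exact: gamma_le].
Qed.

Lemma stability_dmu_ge0 e g m S dm dS w : 0 <= e -> 0 < 1 - 2 * e ->
  stability e g m S dm dS -> Delta_N e w -> 0 <= dm.
Proof.
move=> e_ge0 e_lt_half [Iin [outer_card stable]] wD.
have [mean_bnd _] := stable _ (Delta_N_restrict e_ge0 e_lt_half outer_card wD).
exact: le_trans (norm2_ge0 _) mean_bnd.
Qed.

Lemma OPT_le_stable e g m S dm dS c Rk : (0 < p)%N -> (0 < N)%N ->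
  0 <= e -> 0 < 1 - 2 * e -> stability e g m S dm dS -> norm2 (c - m) <= Rk ->
  OPT e g c <= opnorm S + dS + (dm + Rk) ^+ 2.
Proof.
move=> p_gt0 N_gt0 e_ge0 e_lt_half [Iin [outer_card stable]] c_near.
have cardI : #|Iin|%:R + #|~: Iin|%:R = N%:R :> R by rewrite -natrD cardsC card_ord.
have inner_card : (1 - e) * N%:R <= #|Iin|%:R by lra.
have I_gt0 : (0 < #|Iin|)%N.
  by rewrite -(ltr0n R); apply: lt_le_trans inner_card; rewrite mulr_gt0 ?ltr0n //; lra.
have e_lt1 : e < 1 by lra.
have e'_bnd : 0 <= e / (1 - e) < 1.
  by rewrite divr_ge0 ?ltr_pdivrMr /=; lra.
have [mean_bnd loewner_bnd] := stable _ (unif_on_Delta_I e'_bnd I_gt0).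
apply: (OPT_le p_gt0 (unif_on_Delta_N e_lt1 inner_card I_gt0)) => u.
set z := dot u (m - c); set Y := \sum_(n in Iin) unif_on Iin n * dot u (g n - m).
have shift n : dot u (g n - c) = dot u (g n - m) + z by rewrite -dotDr addrA subrK.
rewrite Smat_dot sum_unif_on_supp; under eq_bigr do rewrite shift.
rewrite sum_sqr_shift (sum_unif_on _ I_gt0) mulr1 -/Y.
have second : \sum_(n in Iin) unif_on Iin n * dot u (g n - m) ^+ 2 <=
    (opnorm S + dS) * dot u u.
  rewrite -dot_sum_rank1; apply: le_trans (loewner_le_dot u loewner_bnd) _.
  by rewrite mulmxDl dotDr mul_scalar_mx dotZr mulrDl lerD2r dot_mulmx_le_opnorm.
have Y_bnd : `|Y| <= norm2 u * dm.
  have -> : Y = dot u (\sum_(n in Iin) unif_on Iin n *: (g n - m)).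
    by rewrite dot_sumr; apply: eq_bigr => n _; rewrite dotZr.
  exact: le_trans (ler_norm_dot _ _) (ler_wpM2l (norm2_ge0 u) mean_bnd).
have z_bnd : `|z| <= norm2 u * Rk.
  apply: le_trans (ler_norm_dot _ _) (ler_wpM2l (norm2_ge0 u) _).
  by rewrite -opprB norm2N.
have zY : z * Y <= norm2 u * Rk * (norm2 u * dm).
  by apply: le_trans (ler_norm _) _; rewrite normrM ler_pM.
have z2 : z ^+ 2 <= (norm2 u * Rk) ^+ 2.
  by rewrite -real_normK ?num_real // !expr2 ler_pM.
have := sqr_ge0 (norm2 u * dm); rewrite -norm2_sqr in second *; nra.
Qed.

End Stability.

Theorem mainTheorem14 (R : realType) (p N : nat) (eps zeta : R)
    (Theta B0 : set 'cV[R]_p) (c0 : 'cV[R]_p) (r0 : R)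
    (g : 'cV[R]_p -> 'I_N -> 'cV[R]_p)
    (mu : 'cV[R]_p -> 'cV[R]_p) (Sigma : 'cV[R]_p -> 'M[R]_p)
    (dmu dSig : R -> R) (theta : 'cV[R]_p)
    (what : 'I_N -> R) (muhat : 'cV[R]_p) (T : nat) (Cstop Rk dT Ck : R) :
  0 <= eps -> eps < 1 / 3 -> 0 < zeta < 1 ->
  0 < r0 -> B0 = [set x | norm2 (x - c0) <= r0] -> B0 `<=` Theta ->
  (forall t, psd (Sigma t)) ->
  B0 theta ->
  (* the event: inlier stability for the cloud at theta *)
  stability eps (g theta) (mu theta) (Sigma theta) (dmu zeta) (dSig zeta) ->
  (* output of the outer loop at a terminating iteration *)
  in_hull (g theta) muhat ->
  Delta_N eps what ->
  ( (* (a) stopping threshold certificate *)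
    (gamma (g theta) what muhat <= Cstop /\ Ck = Cstop)
    \/
    (* (b) MW-MMW certificate *)
    (gamma (g theta) what muhat <= OPT eps (g theta) muhat + dT /\
     norm2 (muhat - mu theta) <= Rk /\
     (0 < T)%N /\
     dT <= 4 * nu (g theta) *
             (Num.sqrt (ln p%:R / T%:R) + Num.sqrt (ln (1 / (1 - eps)) / T%:R)) /\
     has_ubound [set opnorm (Sigma t) | t in B0] /\
     Ck = sup [set opnorm (Sigma t) | t in B0] + dSig zeta
          + (dmu zeta + Rk) ^+ 2 + dT) ) ->
  norm2 (\sum_(n < N) what n *: g theta n - mu theta)
    <= dmu zeta + Num.sqrt (eps / (1 - 2 * eps)) * Num.sqrt Ck.
Proof.
move=> eps_ge0 eps_lt_third _ _ _ _ _ theta_B0 stable _ whatD certificate.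
have eps_lt_half : 0 < 1 - 2 * eps by lra.
(* In dimension 0 there is no density matrix, so [OPT] is degenerate, but then
   the error vector is trivially 0. *)
have [p0 | p_gt0] := posnP p.
  rewrite norm2_dim0 // addr_ge0 ?mulr_ge0 ?sqrtr_ge0 //.
  exact: stability_dmu_ge0 eps_ge0 eps_lt_half stable whatD.
apply: (stable_mean_err eps_ge0 eps_lt_half stable whatD).
case: certificate => [[gamma_le ->] | [gamma_le [muhat_near [_ [_ [Sigma_ub ->]]]]]].
  exact: gamma_le.
apply: le_trans gamma_le _; rewrite lerD2r.
apply: le_trans (OPT_le_stable p_gt0 (Delta_N_gt0 whatD) eps_ge0 eps_lt_half
  stable muhat_near) _.
by rewrite !lerD2r; apply: (ub_le_sup Sigma_ub); exists theta.
Qed.
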